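(* Let $G$ be a finite group, $\Lambda$ an absolutely irreducible $\mathbb Z[G]$-module of finite rank, $W=\Lambda\otimes\mathbb Q$, $w$ a weight with associated form $(\,,\,)$, $H=\mathrm{Stab}_G(w)$, and let $\{g_1,\dots,g_d\}$ be a set of representatives of the left cosets of $H$ in $G$. Then $(g_iw,g_jw)-(w,w)-1$ is a non-negative integer for all $i\ne j$.
   Context: A weight of $\Lambda$ is $w\in W$ with $gw-w\in\Lambda$ for all $g\in G$. $(\,,\,)$ is the negative definite $G$-invariant symmetric bilinear form on $W$ such that (i) $(w,\lambda)\in\mathbb Z$ for all $\lambda\in\Lambda$, and (ii) every $G$-invariant symmetric bilinear form satisfying (i) is an integer multiple of it. $H=\{g\in G:gw=w\}$. *)

From HB Require Import structures.
From mathcomp Require Import all_boot all_order all_algebra all_fingroup.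
From mathcomp Require Import mxrepresentation.
Set Implicit Arguments. Unset Strict Implicit. Unset Printing Implicit Defensive.
Import Order.TTheory GRing.Theory Num.Theory.
Local Open Scope ring_scope.

(* Conventions: Lambda = Z^n (integral row vectors) inside W = Q^n = 'rV[rat]_n.
   The representation rG : mx_representation rat G n acts on rows on the right;
   the left G-action on W is  g . v := v *m rG g^-1. *)

Definition wact (gT : finGroupType) (G : {group gT}) (n : nat)
  (rG : mx_representation rat G n) (g : gT) (v : 'rV[rat]_n) : 'rV[rat]_n :=
  v *m rG g^-1%g.

Definition in_lattice (n : nat) (v : 'rV[rat]_n) : Prop := v \is a mxOver Num.int.

Definition integral_rep (gT : finGroupType) (G : {group gT}) (n : nat)
  (rG : mx_representation rat G n) : Prop :=
  forall g, g \in G -> rG g \is a mxOver Num.int.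

Definition is_weight (gT : finGroupType) (G : {group gT}) (n : nat)
  (rG : mx_representation rat G n) (w : 'rV[rat]_n) : Prop :=
  forall g, g \in G -> in_lattice (wact rG g w - w).

Definition bform (n : nat) (M : 'M[rat]_n) (u v : 'rV[rat]_n) : rat :=
  (u *m M *m v^T) 0 0.

Definition sym_inv_form (gT : finGroupType) (G : {group gT}) (n : nat)
  (rG : mx_representation rat G n) (M : 'M[rat]_n) : Prop :=
  M^T = M /\ forall g, g \in G -> forall u v, bform M (wact rG g u) (wact rG g v) = bform M u v.

Definition neg_definite (n : nat) (M : 'M[rat]_n) : Prop :=
  forall v : 'rV[rat]_n, v != 0 -> bform M v v < 0.

Definition integral_on_lattice (n : nat) (M : 'M[rat]_n) (w : 'rV[rat]_n) : Prop :=
  forall l : 'rV[rat]_n, in_lattice l -> bform M w l \is a Num.int.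

Definition assoc_form (gT : finGroupType) (G : {group gT}) (n : nat)
  (rG : mx_representation rat G n) (w : 'rV[rat]_n) (M : 'M[rat]_n) : Prop :=
  [/\ sym_inv_form rG M, neg_definite M, integral_on_lattice M w &
      forall M' : 'M[rat]_n, sym_inv_form rG M' -> integral_on_lattice M' w ->
        exists k : int, M' = k%:~R *: M].

Definition stab (gT : finGroupType) (G : {group gT}) (n : nat)
  (rG : mx_representation rat G n) (w : 'rV[rat]_n) : {set gT} :=
  [set g in G | wact rG g w == w].

From HB Require Import structures.
From mathcomp Require Import all_boot all_order all_algebra all_fingroup.
From mathcomp Require Import mxrepresentation lra.
Set Implicit Arguments. Unset Strict Implicit. Unset Printing Implicit Defensive.
Import Order.TTheory GRing.Theory Num.Theory.
Local Open Scope ring_scope.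

(* Two distinct translates a = g_i w and b = g_j w have the same norm (w, w).
   Since b - a lies in the lattice, (a, b) - (w, w) = (a, b - a) is an integer
   by G-invariance and condition (i); negative definiteness applied to a - b
   makes it positive. *)

Lemma bformBl n (M : 'M[rat]_n) u u' v :
  bform M (u - u') v = bform M u v - bform M u' v.
Proof. by rewrite /bform !mulmxBl !mxE. Qed.

Lemma bformBr n (M : 'M[rat]_n) u v v' :
  bform M u (v - v') = bform M u v - bform M u v'.
Proof. by rewrite /bform linearB /= mulmxBr !mxE. Qed.

Lemma bformC n (M : 'M[rat]_n) u v : M^T = M -> bform M u v = bform M v u.
Proof.
move=> symM; have tr00 (A : 'M[rat]_1) : A 0 0 = A^T 0 0 by rewrite mxE.
by rewrite /bform [LHS]tr00 !trmx_mul trmxK symM mulmxA.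
Qed.

Lemma neg_definite_bform_lt n (M : 'M[rat]_n) u v :
  M^T = M -> neg_definite M -> u != v ->
  bform M u u + bform M v v < bform M u v *+ 2.
Proof.
move=> symM negM neq_uv; have := negM (u - v); rewrite subr_eq0 => /(_ neq_uv).
by rewrite !bformBl !bformBr (bformC v u symM) => ?; lra.
Qed.

Lemma in_latticeB n (u v : 'rV[rat]_n) :
  in_lattice u -> in_lattice v -> in_lattice (u - v).
Proof.
by move=> /mxOverP u_int /mxOverP v_int; apply/mxOverP => i j; rewrite !mxE rpredB.
Qed.

Lemma natrB1_int (R : archiNumDomainType) (x : R) :
  x \is a Num.int -> 0 < x -> x - 1 \is a Num.nat.
Proof.
move=> x_int x_gt0; rewrite natrEint rpredB ?rpred1 //= subr_ge0.
by rewrite -(gtr0_norm x_gt0) norm_intr_ge1 // gt_eqF.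
Qed.

Section WeightTranslates.

Variables (gT : finGroupType) (G : {group gT}) (n : nat).
Variables (rG : mx_representation rat G n) (w : 'rV[rat]_n) (M : 'M[rat]_n).

Lemma wact1 v : wact rG 1 v = v.
Proof. by rewrite /wact invg1 repr_mx1 mulmx1. Qed.

Lemma wactM g h v : g \in G -> h \in G ->
  wact rG (g * h) v = wact rG g (wact rG h v).
Proof. by move=> gG hG; rewrite /wact invMg repr_mxM ?groupV // mulmxA. Qed.

Lemma wactKV g v : g \in G -> wact rG g^-1 (wact rG g v) = v.
Proof. by move=> gG; rewrite -wactM ?groupV // mulVg wact1. Qed.

Lemma wactVK g v : g \in G -> wact rG g (wact rG g^-1 v) = v.
Proof. by move=> gG; rewrite -wactM ?groupV // mulgV wact1. Qed.

Lemma wact_in_lattice g v : integral_rep rG -> g \in G ->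
  in_lattice v -> in_lattice (wact rG g v).
Proof. by move=> intR gG v_int; apply: mxOverM => //; apply: intR; rewrite groupV. Qed.

Lemma wact_eq_mem_lcoset x y : x \in G -> y \in G ->
  wact rG x w = wact rG y w -> y \in (x *: stab rG w)%g.
Proof.
move=> xG yG eq_xy; rewrite mem_lcoset inE groupM ?groupV //=.
by rewrite wactM ?groupV // -eq_xy wactKV.
Qed.

Lemma transversal_wact_inj (X : {set gT}) :
  is_transversal X (lcosets (stab rG w) G) G ->
  {in X &, injective (fun g => wact rG g w)}.
Proof.
move=> trX x y xX yX eq_xy; have /subsetP XG := transversal_sub trX.
set B := (x *: stab rG w)%g.
have xB : x \in B by rewrite mem_lcoset mulVg inE group1 wact1 eqxx.
have yB : y \in B := wact_eq_mem_lcoset (XG x xX) (XG y yX) eq_xy.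
have B_coset : B \in lcosets (stab rG w) G.
  by apply/imsetP; exists x; rewrite ?XG ?lcosetE.
have XB := setI_transversal_pblock trX x B_coset.
have /[!XB] /set1P -> : x \in X :&: B by rewrite inE xX.
by have /[!XB] /set1P -> : y \in X :&: B by rewrite inE yX.
Qed.

Hypotheses (intR : integral_rep rG) (w_weight : is_weight rG w).
Hypotheses (symM : M^T = M) (negM : neg_definite M).
Hypothesis invM :
  forall g, g \in G -> forall u v, bform M (wact rG g u) (wact rG g v) = bform M u v.
Hypothesis intM : integral_on_lattice M w.

Lemma bform_wact_subr_int x y : x \in G -> y \in G ->
  bform M (wact rG x w) (wact rG y w) - bform M w w \is a Num.int.
Proof.
move=> xG yG; set a := wact rG x w; set b := wact rG y w.
have ba_lattice : in_lattice (b - a).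
  have -> : b - a = (b - w) - (a - w) by rewrite opprB addrA subrK.
  by apply: in_latticeB; apply: w_weight.
have -> : bform M a b - bform M w w = bform M a (b - a) by rewrite bformBr invM.
rewrite -[b - a](wactVK _ xG) invM //.
by apply: intM; apply: wact_in_lattice; rewrite ?groupV.
Qed.

Lemma bform_wact_subr_gt0 x y : x \in G -> y \in G ->
  wact rG x w != wact rG y w ->
  0 < bform M (wact rG x w) (wact rG y w) - bform M w w.
Proof.
move=> xG yG /(neg_definite_bform_lt symM negM).
by rewrite !invM // -mulr2n ltr_pMn2r // subr_gt0.
Qed.

End WeightTranslates.

Theorem lemma3p1 (gT : finGroupType) (G : {group gT}) (n : nat)
  (rG : mx_representation rat G n) (w : 'rV[rat]_n) (M : 'M[rat]_n)
  (X : {set gT}) :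
  integral_rep rG ->
  mx_absolutely_irreducible rG ->
  is_weight rG w ->
  assoc_form rG w M ->
  is_transversal X (lcosets (stab rG w) G) G ->
  forall x y, x \in X -> y \in X -> x != y ->
    bform M (wact rG x w) (wact rG y w) - bform M w w - 1 \is a Num.nat.
Proof.
move=> intR _ w_weight [[symM invM] negM intM _] trX x y xX yX neq_xy.
have /subsetP XG := transversal_sub trX.
have neq_wact : wact rG x w != wact rG y w.
  exact: contra_neq (transversal_wact_inj trX xX yX) neq_xy.
have [xG yG] := (XG x xX, XG y yX).
apply: natrB1_int; first exact: bform_wact_subr_int.
exact: bform_wact_subr_gt0.
Qed.
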